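(* For every $\epsilon>0$ there exist $M\in\mathbb N$ and $R>0$ such that for all $m\ge M$ and all $r\ge R$, $$\mathbb E\big(v_m^r\big)\le(2+\epsilon)\log r.$$
   Context: Expectation is with respect to Lebesgue measure $\lambda$ on $[0,1)$; $\log$ is natural. For $m\in\mathbb N$, $j\in\mathbb N_0$, $i\in\{0,\dots,2^{m-1}-1\}$ let $J^m_{j,i}=[2^{-j}-(i+1)2^{-(j+m)},\,2^{-j}-i2^{-(j+m)})$ (these partition $(0,1)$) and $y_{j,i}=\frac{2^{j+m+1}}{2^m-i-1}$. For $r\ge1$, $v_m^r$ is the function constant on each $J^m_{j,i}$ with value $y_{\min\{j,\lfloor\log_2r\rfloor\},i}$. *)

From Stdlib Require Import Reals Lra Lia.
Open Scope R_scope.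

(* floor(log_2 r), as a natural number (r >= 1, so it is >= 0). *)
Definition flog2 (r : R) : nat := Z.to_nat (Int_part (ln r / ln 2)).

Definition J_left (m j i : nat) : R :=
  / 2 ^ j - INR (i + 1) * / 2 ^ (j + m).
Definition J_right (m j i : nat) : R :=
  / 2 ^ j - INR i * / 2 ^ (j + m).

Definition J_len (m j i : nat) : R := J_right m j i - J_left m j i.

Definition y_val (m j i : nat) : R :=
  2 ^ (j + m + 1) / (2 ^ m - INR i - 1).

(* Value of v_m^r on the cell J^m_{j,i}. *)
Definition v_val (m : nat) (r : R) (j i : nat) : R :=
  y_val m (Nat.min j (flog2 r)) i.

Definition row_integral (m : nat) (r : R) (j : nat) : R :=
  sum_f_R0 (fun i => J_len m j i * v_val m r j i) (2 ^ (m - 1) - 1)%nat.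

(* E(v_m^r) = l : the Lebesgue integral over [0,1) of the nonnegative
   function v_m^r, which is constant on each cell of the countable partition
   {J^m_{j,i}} of (0,1), i.e. the sum over all cells of value * length. *)
Definition expectation_is (m : nat) (r l : R) : Prop :=
  infinite_sum (row_integral m r) l.

From Stdlib Require Import Reals ZArith Lra Lia.
Open Scope R_scope.

(* On the cells of row j, v_m^r integrates to H_m * 2^(min(j,K)+1-j), where
   K = floor(log2 r) and H_m = sum_{k=2^(m-1)}^{2^m-1} 1/k.  Summing the
   geometric tail over j gives E(v_m^r) = 2 (K + 2) H_m exactly.  Comparing
   H_m with an integral of 1/x yields H_m <= ln 2 + 1/(2^m - 2), so
   E(v_m^r) <= 2 ln r + 4 ln 2 + O(log r / 2^m), which is below
   (2 + eps) ln r once m and r are large. *)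

Lemma ln_le x y : 0 < x -> x <= y -> ln x <= ln y.
Proof.
  intros Hx [Hlt | ->]; [left; apply ln_increasing |]; lra.
Qed.

Lemma ln_sub_ln_le x y : 0 < x -> 0 < y -> ln x - ln y <= (x - y) / y.
Proof.
  intros Hx Hy.
  assert (Hxy : 0 < x / y) by (apply Rdiv_lt_0_compat; lra).
  pose proof (exp_ineq1_le (ln (x / y))) as H.
  rewrite exp_ln in H by exact Hxy.
  unfold Rdiv in H |- *.
  rewrite ln_mult, ln_Rinv in H by (try apply Rinv_0_lt_compat; lra).
  replace ((x - y) * / y) with (x * / y - 1) by (field; lra).
  lra.
Qed.

Lemma inv_le_ln_sub_ln k : 1 < k -> / k <= ln k - ln (k - 1).
Proof.
  intros Hk.
  pose proof (ln_sub_ln_le (k - 1) k ltac:(lra) ltac:(lra)) as H.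
  replace ((k - 1 - k) / k) with (- / k) in H by (field; lra).
  lra.
Qed.

Lemma sum_inv_le_ln B n : INR n + 2 < B ->
  sum_f_R0 (fun i => / (B - INR i - 1)) n <= ln (B - 1) - ln (B - INR n - 2).
Proof.
  induction n as [|n IH]; intros Hn.
  - simpl in Hn |- *.
    replace (B - 0 - 2) with (B - 1 - 1) by ring.
    replace (B - 0 - 1) with (B - 1) by ring.
    apply inv_le_ln_sub_ln; lra.
  - rewrite tech5, S_INR in *.
    specialize (IH ltac:(lra)).
    pose proof (inv_le_ln_sub_ln (B - INR n - 2) ltac:(lra)) as Hstep.
    replace (B - (INR n + 1) - 1) with (B - INR n - 2) by ring.
    replace (B - (INR n + 1) - 2) with (B - INR n - 2 - 1) by ring.
    lra.
Qed.

Lemma Un_cv_const c : Un_cv (fun _ => c) c.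
Proof.
  intros eps Heps; exists 0%nat; intros n _.
  unfold R_dist; rewrite Rminus_diag, Rabs_R0; exact Heps.
Qed.

Lemma INR_flog2_le r : 1 <= r -> INR (flog2 r) <= ln r / ln 2.
Proof.
  intros Hr; unfold flog2.
  assert (Hx : 0 <= ln r / ln 2).
  { apply Rmult_le_pos; [rewrite <- ln_1; apply ln_le; lra |].
    left; apply Rinv_0_lt_compat; pose proof ln_lt_2; lra. }
  destruct (base_Int_part (ln r / ln 2)) as [Hint Hfrac].
  assert (Hpos : (0 <= Int_part (ln r / ln 2))%Z).
  { apply Z.lt_succ_r, lt_IZR; rewrite succ_IZR; simpl; lra. }
  rewrite INR_IZR_INZ, Z2Nat.id by exact Hpos; exact Hint.
Qed.

(* sum_{k=2^(m-1)}^{2^m-1} 1/k, with k = 2^m - 1 - i *)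
Definition harmonic_block (m : nat) : R :=
  sum_f_R0 (fun i => / (2 ^ m - INR i - 1)) (2 ^ (m - 1) - 1).

Lemma harmonic_block_le m : (2 <= m)%nat -> harmonic_block m <= ln 2 + / (2 ^ m - 2).
Proof.
  intros Hm; unfold harmonic_block.
  destruct m as [|k]; [lia|]; replace (S k - 1)%nat with k by lia.
  assert (Hk : 2 <= 2 ^ k).
  { rewrite <- (pow_1 2) at 1; apply Rle_pow; [lra | lia]. }
  assert (Hn : INR (2 ^ k - 1) = 2 ^ k - 1).
  { rewrite minus_INR, pow_INR by (pose proof (Nat.pow_nonzero 2 k); lia).
    replace (INR 2) with 2 by (simpl; ring); simpl INR; ring. }
  change (2 ^ S k) with (2 * 2 ^ k).
  set (X := 2 ^ k) in *.
  pose proof (sum_inv_le_ln (2 * X) (2 ^ k - 1)) as Hsum.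
  rewrite Hn in Hsum; specialize (Hsum ltac:(lra)).
  replace (2 * X - (X - 1) - 2) with (X - 1) in Hsum by ring.
  pose proof (ln_sub_ln_le (2 * X - 1) (2 * X - 2) ltac:(lra) ltac:(lra)) as Hlog.
  replace ((2 * X - 1 - (2 * X - 2)) / (2 * X - 2)) with (/ (2 * X - 2)) in Hlog
    by (field; lra).
  replace (2 * X - 2) with (2 * (X - 1)) in Hlog at 1 by ring.
  rewrite ln_mult in Hlog by lra.
  lra.
Qed.

Definition row_weight (K j : nat) : R := 2 ^ Nat.min j K * 2 / 2 ^ j.

Lemma J_len_eq m j i : J_len m j i = / 2 ^ (j + m).
Proof.
  unfold J_len, J_right, J_left; rewrite plus_INR; simpl INR; ring.
Qed.

Lemma row_integral_eq m r j : (1 <= m)%nat ->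
  row_integral m r j = harmonic_block m * row_weight (flog2 r) j.
Proof.
  intros Hm; unfold row_integral, harmonic_block.
  rewrite Rmult_comm, scal_sum; apply sum_eq; intros i Hi.
  assert (Hi_le : INR i + 1 <= 2 ^ (m - 1)).
  { rewrite <- S_INR, <- (pow_INR 2); replace (INR 2) with 2 by (simpl; ring).
    apply le_INR; pose proof (Nat.pow_nonzero 2 (m - 1)); lia. }
  assert (Hpow : 2 ^ m = 2 * 2 ^ (m - 1)).
  { replace m with (S (m - 1)) at 1 by lia; reflexivity. }
  assert (Hdenom : 2 ^ m - INR i - 1 <> 0) by (pose proof (pos_INR i); lra).
  unfold v_val, y_val, row_weight; rewrite J_len_eq, !pow_add.
  field; repeat split; try exact Hdenom; apply pow_nonzero; lra.
Qed.

Lemma sum_row_weight_head K n : (n <= K)%nat ->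
  sum_f_R0 (row_weight K) n = 2 * (INR n + 1).
Proof.
  unfold row_weight; induction n as [|n IH]; intros Hn.
  - simpl; field.
  - rewrite tech5, IH, Nat.min_l, S_INR by lia.
    field; apply pow_nonzero; lra.
Qed.

Lemma sum_row_weight_tail K p :
  sum_f_R0 (row_weight K) (p + K) = 2 * (INR K + 2) - 2 / 2 ^ p.
Proof.
  induction p as [|p IH].
  - rewrite sum_row_weight_head by lia; simpl; field.
  - rewrite Nat.add_succ_l, tech5, IH; unfold row_weight.
    rewrite Nat.min_r by lia.
    rewrite <- Nat.add_succ_l, pow_add; cbn [pow].
    field; split; apply pow_nonzero; lra.
Qed.

Lemma row_weight_series K : infinite_sum (row_weight K) (2 * (INR K + 2)).
Proof.
  apply (CV_shift _ K).
  apply (Un_cv_ext (fun p => 2 * (INR K + 2) - 2 / 2 ^ p)).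
  { intros p; symmetry; apply sum_row_weight_tail. }
  pose proof (CV_minus _ _ _ _ (Un_cv_const (2 * (INR K + 2))) (cv_pow_half 2)) as Hcv.
  rewrite Rminus_0_r in Hcv; exact Hcv.
Qed.

Lemma expectation_is_closed_form m r : (1 <= m)%nat ->
  expectation_is m r (harmonic_block m * (2 * (INR (flog2 r) + 2))).
Proof.
  intros Hm.
  apply (Un_cv_ext (fun n => harmonic_block m * sum_f_R0 (row_weight (flog2 r)) n)).
  { intros n; rewrite scal_sum; apply sum_eq; intros j _.
    rewrite row_integral_eq by exact Hm; ring. }
  apply CV_mult; [apply Un_cv_const | apply row_weight_series].
Qed.

Lemma inv_pow2_sub2_small d : 0 < d ->
  exists M, (2 <= M)%nat /\ forall m, (M <= m)%nat -> 0 < / (2 ^ m - 2) <= d.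
Proof.
  intros Hd.
  destruct (INR_unbounded (/ d + 2)) as [N HN].
  exists (N + 2)%nat; split; [lia|]; intros m Hm.
  assert (Hlin : INR m < 2 ^ m).
  { rewrite <- (pow_INR 2); replace (INR 2) with 2 by (simpl; ring).
    apply lt_INR, Nat.pow_gt_lin_r; lia. }
  assert (HNm : INR N <= INR m) by (apply le_INR; lia).
  pose proof (Rinv_0_lt_compat d Hd).
  split; [apply Rinv_0_lt_compat; lra|].
  rewrite <- (Rinv_inv d); apply Rinv_le_contravar; lra.
Qed.

Lemma closed_form_le eps S d K L : 0 < eps ->
  S <= ln 2 + d -> 0 < d <= eps * ln 2 / 4 ->
  0 <= K <= L / ln 2 -> 8 / eps + 2 <= L ->
  S * (2 * (K + 2)) <= (2 + eps) * L.
Proof.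
  intros Heps HS [Hd_pos Hd] [HK0 HK] HL.
  pose proof ln_lt_2 as Hln2.
  assert (Hln2_le : ln 2 <= 1).
  { pose proof (ln_sub_ln_le 2 1 ltac:(lra) ltac:(lra)) as Hlog.
    rewrite ln_1 in Hlog; lra. }
  assert (HepsL : 8 + 2 * eps <= eps * L).
  { apply (Rmult_le_compat_l eps) in HL; [|lra].
    replace (eps * (8 / eps + 2)) with (8 + 2 * eps) in HL by (field; lra); exact HL. }
  set (x := L / ln 2) in *.
  assert (Hx : x * ln 2 = L) by (unfold x; field; lra).
  assert (Hbound : S * (2 * (K + 2)) <= (ln 2 + d) * (2 * (x + 2))).
  { apply Rle_trans with ((ln 2 + d) * (2 * (K + 2)));
      [apply Rmult_le_compat_r | apply Rmult_le_compat_l]; lra. }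
  assert (Hdx : d * x <= eps * L / 4).
  { rewrite <- Hx; enough (d * x <= eps * ln 2 / 4 * x) by lra.
    apply Rmult_le_compat_r; lra. }
  replace ((ln 2 + d) * (2 * (x + 2))) with (2 * L + 4 * ln 2 + 2 * (d * x) + 4 * d)
    in Hbound by (rewrite <- Hx; ring).
  nra.
Qed.

Theorem mainTheorem15 :
  forall eps : R, 0 < eps ->
  exists (M : nat) (R0 : R), 0 < R0 /\
    forall (m : nat) (r : R),
      (1 <= m)%nat -> (M <= m)%nat ->
      1 <= r -> R0 <= r ->
      exists E : R, expectation_is m r E /\ E <= (2 + eps) * ln r.
Proof.
  intros eps Heps.
  destruct (inv_pow2_sub2_small (eps * ln 2 / 4)) as [M [HM2 HM]].
  { pose proof ln_lt_2; nra. }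
  exists M, (exp (8 / eps + 2)); split; [apply exp_pos|].
  intros m r _ Hm Hr HR.
  eexists; split; [apply expectation_is_closed_form; lia|].
  apply (closed_form_le _ _ (/ (2 ^ m - 2))).
  - exact Heps.
  - apply harmonic_block_le; lia.
  - exact (HM m Hm).
  - split; [apply pos_INR | exact (INR_flog2_le r Hr)].
  - rewrite <- (ln_exp (8 / eps + 2)); apply ln_le; [apply exp_pos | exact HR].
Qed.
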